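(* Consider a discounted Markov decision process with Borel state space $\mathcal{S}$, action sets $\mathcal{A}(s)$ for $s\in\mathcal{S}$, transition kernel $P(\cdot\mid \alpha,s)$, bounded reward function $r(\alpha,s)$, and discount factor $\beta\in(0,1)$. Fix $\tau\in(0,1)$ and a stationary policy $\pi(\cdot\mid s)$ (a probability distribution over $\mathcal{A}(s)$ for each $s$). For bounded $V:\mathcal{S}\to\mathbb{R}$ define $$(\mathcal{T}^{\tau}_{\pi}V)(s)=Q_{\tau}\big[r(\alpha,s)+\beta V(s')\,\big|\,s\big],\quad \alpha\sim\pi(\cdot\mid s),\ s'\sim P(\cdot\mid\alpha,s),$$ $$(\mathcal{T}^{\tau}_{*}V)(s)=\max_{\alpha\in\mathcal{A}(s)} Q_{\tau}\big[r(\alpha,s)+\beta V(s')\,\big|\,s\big],\quad s'\sim P(\cdot\mid\alpha,s).$$ Then for all bounded $V,W:\mathcal{S}\to\mathbb{R}$, $$\|\mathcal{T}^{\tau}_{\pi}V-\mathcal{T}^{\tau}_{\pi}W\|_\infty\le\beta\|V-W\|_\infty,\qquad \|\mathcal{T}^{\tau}_{*}V-\mathcal{T}^{\tau}_{*}W\|_\infty\le\beta\|V-W\|_\infty.$$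
   Context: For a real random variable $Z$ with CDF $F_Z$, $Q_\tau[Z]=\inf\{x\in\mathbb{R}: F_Z(x)\ge\tau\}$; $Q_\tau[\,\cdot\mid s]$ denotes the $\tau$-quantile of the conditional law given the current state $s$ (for $\mathcal{T}^\tau_\pi$ the randomness is over both the action $\alpha\sim\pi(\cdot\mid s)$ and the next state $s'$; for $\mathcal{T}^\tau_*$ the action $\alpha$ is fixed and only $s'$ is random). The operators are taken to be well defined on bounded (measurable) functions, with the maximum over $\mathcal{A}(s)$ attained. $\|f\|_\infty=\sup_{s\in\mathcal{S}}|f(s)|$. *)

From HB Require Import structures.
From mathcomp Require Import all_boot all_order all_algebra.
From mathcomp Require Import all_classical all_reals all_analysis.
Set Implicit Arguments. Unset Strict Implicit. Unset Printing Implicit Defensive.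
Import Order.TTheory GRing.Theory Num.Theory.
Import numFieldNormedType.Exports.
Local Open Scope classical_set_scope.
Local Open Scope ring_scope.

Section QuantileMDP.
Context {d d' : measure_display} {S : measurableType d} {A : measurableType d'}
  {R : realType}.

Definition quantile (F : R -> \bar R) (tau : R) : R :=
  inf [set x : R | (tau%:E <= F x)%E].

(* CDF of r(a,s) + beta V(s'), a ~ pi(.|s), s' ~ P(.|a,s). *)
Definition cdf_pi (P : R.-pker (A * S) ~> S) (r : A * S -> R) (beta : R)
  (pi : S -> probability A R) (V : S -> R) (s : S) (x : R) : \bar R :=
  (\int[pi s]_a P (a, s) [set s' | (r (a, s) + beta * V s' <= x)%R])%E.

Definition cdf_act (P : R.-pker (A * S) ~> S) (r : A * S -> R) (beta : R)
  (V : S -> R) (s : S) (a : A) (x : R) : \bar R :=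
  P (a, s) [set s' | (r (a, s) + beta * V s' <= x)%R].

Definition T_pi P r beta pi tau (V : S -> R) : S -> R :=
  fun s => quantile (cdf_pi P r beta pi V s) tau.

Definition Q_act P r beta tau (V : S -> R) (s : S) (a : A) : R :=
  quantile (cdf_act P r beta V s a) tau.

(* max over A(s), realised as a supremum (the maximum is assumed attained). *)
Definition T_star P r beta (As : S -> set A) tau (V : S -> R) : S -> R :=
  fun s => sup [set Q_act P r beta tau V s a | a in As s].


Definition supnorm (f : S -> R) : R := sup (range (fun s => `|f s|)).

End QuantileMDP.

(* If V <= W + c pointwise, then {r + beta W <= x} is contained in {r + beta V <= x + beta c},
   so the CDFs satisfy F_W(x) <= F_V(x + beta c), whence Q_tau[r + beta V] <= Q_tau[r + beta W]
   + beta c.  This domination survives averaging the kernel over the policy and passes to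
   maxima over actions and suprema over states.  Boundedness of r, V and W makes
   {x | tau <= F x} nonempty and bounded below, so the quantiles are genuine infima. *)
From HB Require Import structures.
From mathcomp Require Import all_boot all_order all_algebra.
From mathcomp Require Import all_classical all_reals all_analysis.
From mathcomp Require Import lra.
Import Order.TTheory GRing.Theory Num.Theory.
Import numFieldNormedType.Exports.
Local Open Scope classical_set_scope.
Local Open Scope ring_scope.

Lemma bounded_funP {T : Type} {R : realType} {f : T -> R} :
  bounded_fun f -> exists B, forall x, `|f x| <= B.
Proof.
move=> [M [_ HM]]; exists (M + 1) => x.
by apply: (HM (M + 1)) => //; rewrite ltrDl.
Qed.

(* Unlike [ge0_le_integral], no measurability is needed: both integrals are suprema
   over nonnegative simple functions below the integrand. *)
Lemma ge0_le_integralT d (T : measurableType d) (R : realType)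
  (mu : {measure set T -> \bar R}) (f g : T -> \bar R) :
  (forall x, (0 <= f x)%E) -> (forall x, (f x <= g x)%E) ->
  (\int[mu]_x f x <= \int[mu]_x g x)%E.
Proof.
move=> f0 fg; have g0 x : (0 <= g x)%E by apply: le_trans (f0 x) (fg x).
rewrite !ge0_integralTE//; apply: ereal_sup_le => _ [h hf <-].
by exists h => //= x; apply: le_trans (hf x) (fg x).
Qed.

Lemma quantile_le_shift {R : realType} {F G : R -> \bar R} {tau k lo hi : R} :
  0 < tau <= 1 -> (forall x, x < lo -> F x = 0%E) -> G hi = 1%E ->
  (forall x, (G x <= F (x + k)%R)%E) -> quantile F tau <= quantile G tau + k.
Proof.
move=> /andP[tau_gt0 tau_le1] F0 G1 GF; rewrite -lerBlDr; apply: lb_le_inf.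
  by exists hi; rewrite /= G1 lee_fin.
move=> y /= Gy; rewrite lerBlDr; apply: ge_inf; last exact: le_trans Gy (GF y).
exists lo => x /=; apply: contraTT; rewrite -!ltNge => /F0 ->.
by rewrite lte_fin.
Qed.

Lemma sup_image_max {T : Type} {R : realType} {D : set T} {f : T -> R} {a : T} :
  D a -> (forall b, D b -> f b <= f a) -> sup [set f b | b in D] = f a.
Proof.
move=> Da fa; apply/eqP; rewrite eq_le; apply/andP; split.
  by apply: ge_sup; [exists (f a), a | move=> _ [b Db <-]; exact: fa].
apply: ub_le_sup; last by exists a.
by exists (f a) => _ [b Db <-]; exact: fa.
Qed.

Lemma dist_argmax {T : Type} {R : realType} {D : set T} {f g : T -> R} {a b : T} {e : R} :
  D a -> D b -> (forall x, D x -> f x <= f a) -> (forall x, D x -> g x <= g b) ->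
  (forall x, `|f x - g x| <= e) -> `|f a - g b| <= e.
Proof.
move=> Da Db fa gb fg; have := fg a; have := fg b; have := fa b Db; have := gb a Da.
by rewrite !ler_distl => *; apply/andP; split; lra.
Qed.

Section supnorm.
Context {d} {S : measurableType d} {R : realType}.

Lemma ler_supnorm (f : S -> R) s : bounded_fun f -> `|f s| <= supnorm f.
Proof.
move=> /bounded_funP[B fB]; apply: ub_le_sup; last by exists s.
by exists B => _ [z _ <-].
Qed.

Lemma supnorm_empty (f : S -> R) : ~ (exists s : S, True) -> supnorm f = 0.
Proof.
move=> S0; rewrite /supnorm; suff -> : range (fun s => `|f s|) = set0 by rewrite sup0.
by apply/seteqP; split => // x [s _ _]; apply: S0; exists s.
Qed.

Lemma supnorm_ge0 (f : S -> R) : bounded_fun f -> 0 <= supnorm f.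
Proof.
move=> bf; have [[s _]|S0] := pselect (exists s : S, True).
  exact: le_trans (normr_ge0 _) (ler_supnorm f s bf).
by rewrite supnorm_empty.
Qed.

Lemma supnorm_le (f : S -> R) k :
  0 <= k -> (forall s, `|f s| <= k) -> supnorm f <= k.
Proof.
move=> k0 fk; have [[s _]|S0] := pselect (exists s : S, True).
  by apply: ge_sup; [exists `|f s|, s | move=> _ [z _ <-]; exact: fk].
by rewrite supnorm_empty.
Qed.

End supnorm.

Section quantile_Bellman.
Context {d d'} {S : measurableType d} {A : measurableType d'} {R : realType}.
Variables (P : R.-pker (A * S) ~> S) (r : A * S -> R) (beta tau M : R).
Hypothesis beta_gt0 : 0 < beta.
Hypothesis tau_in : 0 < tau <= 1.
Hypothesis r_le : forall z, `|r z| <= M.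

Lemma measurable_level_set (V : S -> R) c x : measurable_fun setT V ->
  measurable [set s' | c + beta * V s' <= x].
Proof.
move=> mV; have mf : measurable_fun setT (fun s' => c + beta * V s').
  exact/measurable_realfun.measurable_funD/measurable_realfun.measurable_funM.
have := mf measurableT _ (measurable_itv `]-oo, x]).
by rewrite setTI; congr measurable; apply/seteqP; split => z /=; rewrite in_itv.
Qed.

Section cdf_bounds.
Variables (V : S -> R) (B : R).
Hypothesis V_le : forall z, `|V z| <= B.

Lemma cdf_act_eq0 s a x : x < - (M + beta * B) -> cdf_act P r beta V s a x = 0%E.
Proof.
move=> x_lt; rewrite /cdf_act.
suff -> : [set s' | r (a, s) + beta * V s' <= x] = set0 by rewrite measure0.
apply/seteqP; split => // z /=; apply/negP; rewrite -ltNge; apply: lt_le_trans x_lt _.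
have := r_le (a, s); have := V_le z; rewrite !ler_norml => /andP[Vz _] /andP[rz _].
by rewrite opprD lerD // -mulrN ler_wpM2l // ltW.
Qed.

Lemma cdf_act_eq1 s a : cdf_act P r beta V s a (M + beta * B) = 1%E.
Proof.
rewrite /cdf_act.
suff -> : [set s' | r (a, s) + beta * V s' <= M + beta * B] = setT by rewrite prob_kernel.
apply/seteqP; split => // z _ /=.
have := r_le (a, s); have := V_le z; rewrite !ler_norml => /andP[_ Vz] /andP[_ rz].
by rewrite lerD // ler_wpM2l // ltW.
Qed.

Lemma cdf_pi_eq0 pi s x : x < - (M + beta * B) -> cdf_pi P r beta pi V s x = 0%E.
Proof.
move=> x_lt; rewrite /cdf_pi (eq_integral (cst 0%E)) ?integral0// => a _.
exact: cdf_act_eq0.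
Qed.

Lemma cdf_pi_eq1 (pi : S -> probability A R) s :
  cdf_pi P r beta pi V s (M + beta * B) = 1%E.
Proof.
rewrite /cdf_pi (eq_integral (cst 1%E)) => [|a _]; last exact: cdf_act_eq1.
by rewrite integral_cst // mul1e; exact: probability_setT.
Qed.

End cdf_bounds.

Section cdf_shift.
Variables (V W : S -> R) (c : R).
Hypotheses (mV : measurable_fun setT V) (mW : measurable_fun setT W).
Hypothesis V_le : forall z, V z <= W z + c.

Lemma cdf_act_shift s a x :
  (cdf_act P r beta W s a x <= cdf_act P r beta V s a (x + beta * c)%R)%E.
Proof.
rewrite /cdf_act; apply: le_measure; rewrite ?inE; try exact: measurable_level_set.
move=> z /= Wz; apply: le_trans (_ : r (a, s) + beta * (W z + c) <= _).
  by rewrite lerD2l ler_wpM2l // ltW.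
by rewrite mulrDr addrA lerD2r.
Qed.

Lemma cdf_pi_shift pi s x :
  (cdf_pi P r beta pi W s x <= cdf_pi P r beta pi V s (x + beta * c)%R)%E.
Proof.
apply: ge0_le_integralT => a; first exact: measure_ge0.
exact: cdf_act_shift.
Qed.

End cdf_shift.

Section quantile_shift.
Variables (V W : S -> R) (c : R).
Hypotheses (mV : measurable_fun setT V) (bV : bounded_fun V).
Hypotheses (mW : measurable_fun setT W) (bW : bounded_fun W).
Hypothesis V_le : forall z, V z <= W z + c.

Lemma Q_act_le_shift s a :
  Q_act P r beta tau V s a <= Q_act P r beta tau W s a + beta * c.
Proof.
have [BV V_bd] := bounded_funP bV; have [BW W_bd] := bounded_funP bW.
apply: (quantile_le_shift tau_in (cdf_act_eq0 _ _ V_bd s a) (cdf_act_eq1 _ _ W_bd s a)).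
exact: cdf_act_shift.
Qed.

Lemma T_pi_le_shift pi s :
  T_pi P r beta pi tau V s <= T_pi P r beta pi tau W s + beta * c.
Proof.
have [BV V_bd] := bounded_funP bV; have [BW W_bd] := bounded_funP bW.
apply: (quantile_le_shift tau_in (cdf_pi_eq0 _ _ V_bd pi s) (cdf_pi_eq1 _ _ W_bd pi s)).
exact: cdf_pi_shift.
Qed.

End quantile_shift.

Section quantile_dist.
Variables (V W : S -> R) (c : R).
Hypotheses (mV : measurable_fun setT V) (bV : bounded_fun V).
Hypotheses (mW : measurable_fun setT W) (bW : bounded_fun W).
Hypothesis VW_le : forall z, `|V z - W z| <= c.

Let V_le z : V z <= W z + c.
Proof. by have := VW_le z; rewrite ler_distl; lra. Qed.

Let W_le z : W z <= V z + c.
Proof. by have := VW_le z; rewrite ler_distl; lra. Qed.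

Lemma Q_act_dist s a :
  `|Q_act P r beta tau V s a - Q_act P r beta tau W s a| <= beta * c.
Proof.
by rewrite ler_distl lerBlDr; apply/andP; split; apply: Q_act_le_shift.
Qed.

Lemma T_pi_dist pi s :
  `|T_pi P r beta pi tau V s - T_pi P r beta pi tau W s| <= beta * c.
Proof.
by rewrite ler_distl lerBlDr; apply/andP; split; apply: T_pi_le_shift.
Qed.

End quantile_dist.

End quantile_Bellman.

Theorem theorem2 (d d' : measure_display) (S : measurableType d)
  (A : measurableType d') (R : realType)
  (As : S -> set A) (P : R.-pker (A * S) ~> S) (r : A * S -> R)
  (beta tau : R) (pi : S -> probability A R) :
  measurable_fun setT r ->
  (exists M : R, forall x, `|r x| <= M) ->
  0 < beta < 1 ->
  0 < tau < 1 ->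
  (forall s, measurable (As s)) ->
  (forall s, pi s (As s) = 1%E) ->
  (* standing assumption: the maximum over A(s) is attained *)
  (forall (V : S -> R), measurable_fun setT V -> bounded_fun V ->
     forall s, exists2 a, As s a &
       forall b, As s b -> Q_act P r beta tau V s b <= Q_act P r beta tau V s a) ->
  forall V W : S -> R,
    measurable_fun setT V -> bounded_fun V ->
    measurable_fun setT W -> bounded_fun W ->
    supnorm (T_pi P r beta pi tau V \- T_pi P r beta pi tau W)
      <= beta * supnorm (V \- W)
    /\
    supnorm (T_star P r beta As tau V \- T_star P r beta As tau W)
      <= beta * supnorm (V \- W).
Proof.
move=> _ [M r_le] /andP[beta_gt0 _] /andP[tau_gt0 tau_lt1] _ _ max_attained
  V W mV bV mW bW.
have tau_in : 0 < tau <= 1 by rewrite tau_gt0 ltW.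
have bVW : bounded_fun (V \- W) by exact: bounded_funD bV (bounded_funN bW).
have VW_le z : `|V z - W z| <= supnorm (V \- W) by exact: ler_supnorm _ z bVW.
have Q_dist s a : `|Q_act P r beta tau V s a - Q_act P r beta tau W s a|
    <= beta * supnorm (V \- W) by exact: Q_act_dist.
have c_ge0 : 0 <= beta * supnorm (V \- W).
  exact: mulr_ge0 (ltW beta_gt0) (supnorm_ge0 _ bVW).
split; apply: supnorm_le => // s.
  exact: T_pi_dist.
have [aV AaV aV_max] := max_attained V mV bV s.
have [aW AaW aW_max] := max_attained W mW bW s.
rewrite /= /T_star (sup_image_max AaV aV_max) (sup_image_max AaW aW_max).
exact: dist_argmax AaV AaW aV_max aW_max (Q_dist s).
Qed.
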